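(* Let $\mathcal M=(M,<,+,0,\ldots)$ be a definably complete locally o-minimal expansion of an ordered group. Every definable metric space has the definable curve selection property.
   Context: ''Definable'' means definable in $\mathcal M$ with parameters. $\mathcal M$ is an expansion of an ordered group with dense order without endpoints; locally o-minimal: for every definable $Y\subseteq M$ and $a\in M$ there is an open interval $I\ni a$ with $Y\cap I$ a finite union of points and open intervals; definably complete: every definable subset of $M$ has sup and inf in $M\cup\{\pm\infty\}$. A definable metric space $(X,d_X)$ is a definable set with a definable $d_X:X\times X\to\{a\ge 0\}$ satisfying $d_X(x,y)=0\iff x=y$, symmetry and triangle inequality, with the topology generated by the balls $\{y:d_X(x,y)<\varepsilon\}$. A definable curve is a definable, not necessarily continuous, map from an open interval. For $\gamma:(a,b)\to X$, $\operatorname{Conv}_{\mathrm{left}}(\gamma)$ is the set of $x\in X$ such that for every $t\in(a,b)$ and every definable neighborhood $A$ of $x$, $\gamma((a,t))\cap A\ne\emptyset$. A definable topological space $(X,\tau)$ has the definable curve selection property if for every definable $C\subseteq X$ and every $x$ in the frontier $\partial_\tau C$, there is a definable curve $\gamma:(a,b)\to C$ with $a\in M$ and $x\in\operatorname{Conv}_{\mathrm{left}}(\gamma)$. *)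

From mathcomp Require Import all_boot.
Set Implicit Arguments. Unset Strict Implicit. Unset Printing Implicit Defensive.

Definition tinit (M : Type) n (x : 'I_n.+1 -> M) : 'I_n -> M :=
  fun i => x (lift ord_max i).
Definition ttail (M : Type) n (x : 'I_n.+1 -> M) : 'I_n -> M :=
  fun i => x (lift ord0 i).
Definition tsnoc (M : Type) n (x : 'I_n -> M) (y : M) : 'I_n.+1 -> M :=
  fun i => match unlift ord_max i with Some j => x j | None => y end.
Definition tleft (M : Type) m n (z : 'I_(m + n) -> M) : 'I_m -> M :=
  fun i => z (lshift n i).
Definition tright (M : Type) m n (z : 'I_(m + n) -> M) : 'I_n -> M :=
  fun k => z (rshift m k).

Definition i3_0 : 'I_3 := @Ordinal 3 0 isT.
Definition i3_1 : 'I_3 := @Ordinal 3 1 isT.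
Definition i3_2 : 'I_3 := @Ordinal 3 2 isT.

(* A structure M = (M,<,+,0,...) in the sense of van den Dries: a sequence
   (Def n) of boolean algebras of subsets of M^n, closed under cartesian
   products with M, containing the diagonals, closed under projection;
   containing the graphs of < and +, and all singletons (parameters).
   Def n A  <->  A is definable (with parameters) in M. *)
Record DCLOMExpansion := {
  carrier :> Type;
  lt : carrier -> carrier -> Prop;
  add : carrier -> carrier -> carrier;
  zero : carrier;
  opp : carrier -> carrier;
  Def : forall n, (('I_n -> carrier) -> Prop) -> Prop;
  lt_irrefl : forall x, ~ lt x x;
  lt_trans : forall x y z, lt x y -> lt y z -> lt x z;
  lt_total : forall x y, lt x y \/ x = y \/ lt y x;
  lt_dense : forall x y, lt x y -> exists z, lt x z /\ lt z y;
  no_min : forall x, exists y, lt y x;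
  no_max : forall x, exists y, lt x y;
  addA : forall x y z, add x (add y z) = add (add x y) z;
  addC : forall x y, add x y = add y x;
  add0 : forall x, add zero x = x;
  addN : forall x, add x (opp x) = zero;
  lt_add : forall x y z, lt x y -> lt (add x z) (add y z);
  Def_T : forall n, @Def n (fun _ => True);
  Def_C : forall n A, @Def n A -> @Def n (fun x => ~ A x);
  Def_U : forall n A B, @Def n A -> @Def n B -> @Def n (fun x => A x \/ B x);
  Def_prodr : forall n A, @Def n A -> @Def n.+1 (fun x => A (tinit x));
  Def_prodl : forall n A, @Def n A -> @Def n.+1 (fun x => A (ttail x));
  Def_diag : forall n (i j : 'I_n), @Def n (fun x => x i = x j);
  Def_proj : forall n A, @Def n.+1 A -> @Def n (fun x => exists y, A (tsnoc x y));
  Def_lt : @Def 2 (fun x => lt (x ord0) (x ord_max));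
  Def_add : @Def 3 (fun x => x i3_2 = add (x i3_0) (x i3_1));
  Def_const : forall a, @Def 1 (fun x => x ord0 = a);
  loc_omin : forall (Y : ('I_1 -> carrier) -> Prop), @Def 1 Y ->
    forall a, exists c d, lt c a /\ lt a d /\
      exists (k : nat) (pts : 'I_k -> carrier) (l : nat) (lo hi : 'I_l -> carrier),
        (forall j, lt (lo j) (hi j)) /\
        forall x, lt c x -> lt x d ->
          (Y (fun _ => x) <->
            (exists i, x = pts i) \/ (exists j, lt (lo j) x /\ lt x (hi j)));
  (* definably complete: sup/inf in M ∪ {±oo}; i.e. nonempty bounded
     definable sets have a least upper / greatest lower bound in M *)
  def_sup : forall (Y : ('I_1 -> carrier) -> Prop), @Def 1 Y ->
    (exists y, Y (fun _ => y)) ->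
    (exists u, forall y, Y (fun _ => y) -> lt y u \/ y = u) ->
    exists s, (forall y, Y (fun _ => y) -> lt y s \/ y = s) /\
      (forall u, (forall y, Y (fun _ => y) -> lt y u \/ y = u) -> lt s u \/ s = u);
  def_inf : forall (Y : ('I_1 -> carrier) -> Prop), @Def 1 Y ->
    (exists y, Y (fun _ => y)) ->
    (exists u, forall y, Y (fun _ => y) -> lt u y \/ u = y) ->
    exists s, (forall y, Y (fun _ => y) -> lt s y \/ s = y) /\
      (forall u, (forall y, Y (fun _ => y) -> lt u y \/ u = y) -> lt u s \/ u = s)
}.

Section MetricDefs.
Variable M : DCLOMExpansion.
Local Notation "x <. y" := (lt x y) (at level 70).
Definition leM (x y : M) := x <. y \/ x = y.

Record is_definable_metric n (X : ('I_n -> M) -> Prop)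
    (d : ('I_n -> M) -> ('I_n -> M) -> M) : Prop := {
  dm_X : Def X;
  dm_graph : @Def M ((n + n) + 1) (fun z =>
      X (tleft (tleft z)) /\ X (tright (tleft z)) /\
      tright z ord0 = d (tleft (tleft z)) (tright (tleft z)));
  dm_nonneg : forall x y, X x -> X y -> leM (zero M) (d x y);
  dm_zero : forall x y, X x -> X y -> (d x y = zero M <-> x = y);
  dm_sym : forall x y, X x -> X y -> d x y = d y x;
  dm_tri : forall x y z, X x -> X y -> X z -> leM (d x z) (add (d x y) (d y z))
}.

Variables (n : nat) (X : ('I_n -> M) -> Prop) (d : ('I_n -> M) -> ('I_n -> M) -> M).

(* t in the open interval (a, b), b = None meaning +oo *)
Definition in_int (a : M) (b : option M) (t : M) :=
  a <. t /\ (match b with Some b' => t <. b' | None => True end).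

Definition def_nbhd (x : 'I_n -> M) (A : ('I_n -> M) -> Prop) :=
  Def A /\ (forall y, A y -> X y) /\
  exists e, zero M <. e /\ forall y, X y -> d x y <. e -> A y.

Definition def_curve_into (a : M) (b : option M) (gamma : M -> 'I_n -> M)
    (C : ('I_n -> M) -> Prop) :=
  (exists t, in_int a b t) /\
  @Def M (1 + n) (fun z => in_int a b (tleft z ord0) /\
                           forall i, tright z i = gamma (tleft z ord0) i) /\
  (forall t, in_int a b t -> C (gamma t)).

Definition conv_left (a : M) (b : option M) (gamma : M -> 'I_n -> M) x :=
  X x /\ forall t, in_int a b t -> forall A, def_nbhd x A ->
    exists s, a <. s /\ s <. t /\ A (gamma s).

Definition frontier (C : ('I_n -> M) -> Prop) x :=
  X x /\ ~ C x /\ forall e, zero M <. e -> exists y, C y /\ d x y <. e.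

Definition has_def_curve_selection :=
  forall C : ('I_n -> M) -> Prop, Def C -> (forall y, C y -> X y) ->
  forall x, frontier C x ->
  exists (a : M) (b : option M) (gamma : M -> 'I_n -> M),
    def_curve_into a b gamma C /\ conv_left a b gamma x.

End MetricDefs.

From Pilot Require Import Defs.
From mathcomp Require Import all_boot zify.
From Stdlib Require Import FunctionalExtensionality PropExtensionality Classical ClassicalEpsilon.

(* Curve selection reduces to definable choice: if [x] lies in the frontier of
   [C], a definable selector [t |-> f t] with [f t] in [C] and [d x (f t) < t]
   for [t > 0] is a curve on [(0, +oo)] converging to [x] at [0].

   Definable choice is proved one coordinate at a time. For a definable family
   of nonempty sets [W p] in [M], let [V p = {|u| : u in W p}] and let [a] be its
   infimum, which exists by definable completeness. If [a] is in [V p] it is the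
   canonical point of [V p]; otherwise local o-minimality puts an interval
   [(a, e)] inside [V p], and the midpoint of [a] and the supremum of all such
   [e <= a + c] is in [V p]. The canonical point [w] is first-order definable
   from [p], and [w] or [-w], whichever lies in [W p], is selected. Definability
   of these sets comes from the definability of every set given by a
   first-order formula, proved by induction on formulas. *)

Set Implicit Arguments. Unset Strict Implicit. Unset Printing Implicit Defensive.

Declare Scope M_scope.
Delimit Scope M_scope with M.

Section LocallyOMinimal.
Variable M : DCLOMExpansion.
Local Notation D n P := (@Def M n P).
Local Notation "x <. y" := (@Defs.lt M x y) (at level 70).
Local Notation "x <=. y" := (@leM M x y) (at level 70).
Local Notation "x +. y" := (@add M x y) (at level 50, left associativity).
Local Notation "-. x" := (@opp M x) (at level 35).
Local Notation "0" := (zero M) : M_scope.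

Lemma lt_asym (x y : M) : x <. y -> ~ y <. x.
Proof. by move=> h1 h2; apply: (lt_irrefl (lt_trans h1 h2)). Qed.
Lemma lt_le_trans (x y z : M) : x <. y -> y <=. z -> x <. z.
Proof. by move=> h [h'|<-] //; apply: lt_trans h h'. Qed.
Lemma le_lt_trans (x y z : M) : x <=. y -> y <. z -> x <. z.
Proof. by move=> [h|->] h' //; apply: lt_trans h h'. Qed.
Lemma le_trans (x y z : M) : x <=. y -> y <=. z -> x <=. z.
Proof. by move=> [h|->] // h'; left; apply: lt_le_trans h h'. Qed.
Lemma le_anti (x y : M) : x <=. y -> y <=. x -> x = y.
Proof. by move=> [h|//] [h'|//]; case: (lt_asym h h'). Qed.
Lemma nlt_le (x y : M) : ~ x <. y -> y <=. x.
Proof. by move=> H; case: (lt_total x y) => [/H[]|[->|h]]; [right|left]. Qed.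
Lemma le_nlt (x y : M) : x <=. y -> ~ y <. x.
Proof. by move=> h h'; apply: (lt_irrefl (le_lt_trans h h')). Qed.

Lemma min_exists (x y : M) : exists e, [/\ e <=. x, e <=. y & e = x \/ e = y].
Proof.
case: (lt_total x y) => [h|[->|h]].
- by exists x; split; [right|left|left].
- by exists y; split; [right|right|right].
- by exists y; split; [left|right|right].
Qed.

Lemma addr0 (x : M) : x +. 0%M = x. Proof. by rewrite addC add0. Qed.
Lemma addNr (x : M) : -. x +. x = 0%M. Proof. by rewrite addC addN. Qed.
Lemma addrK (x y : M) : x +. y +. -. y = x. Proof. by rewrite -addA addN addr0. Qed.
Lemma addrI (x y z : M) : z +. x = z +. y -> x = y.
Proof. by move=> h; rewrite -(addrK x z) -(addrK y z) !(addC _ z) h. Qed.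
Lemma addrACA (a b c d : M) : a +. b +. (c +. d) = a +. c +. (b +. d).
Proof. by rewrite -!addA (addA b c d) (addC b c) -addA. Qed.
Lemma opprD (a b : M) : -. (a +. b) = -. a +. -. b.
Proof. by apply: (@addrI _ _ (a +. b)); rewrite addN addrACA !addN add0. Qed.
Lemma oppr0 : -. 0%M = 0%M :> M. Proof. by rewrite -(add0 (-. 0%M)) addN. Qed.
Lemma opprK (x : M) : -. (-. x) = x.
Proof. by apply: (@addrI _ _ (-. x)); rewrite addN addNr. Qed.

Lemma ltD2l (x y z : M) : x <. y -> z +. x <. z +. y.
Proof. by rewrite (addC z x) (addC z y); apply: lt_add. Qed.
Lemma ltD (a b c d : M) : a <. b -> c <. d -> a +. c <. b +. d.
Proof. by move=> h1 h2; apply: lt_trans (lt_add c h1) (ltD2l b h2). Qed.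
Lemma leD (a b c d : M) : a <=. b -> c <=. d -> a +. c <=. b +. d.
Proof.
move=> [h1|<-] [h2|<-]; try by [left; apply: ltD|right].
- by left; apply: lt_add.
- by left; apply: ltD2l.
Qed.
Lemma lt_addr (a c : M) : 0%M <. c -> a <. a +. c.
Proof. by move=> h; move: (ltD2l a h); rewrite addr0. Qed.
Lemma ltN2 (a b : M) : a <. b -> -. b <. -. a.
Proof.
move=> h; move: (lt_add (-. a +. -. b) h).
by rewrite addA addN add0 (addC (-. a)) addA addN add0.
Qed.
Lemma subr_gt0 (a b : M) : a <. b -> 0%M <. b +. -. a.
Proof. by move=> h; move: (lt_add (-. a) h); rewrite addN. Qed.
Lemma oppr_lt0 (e : M) : 0%M <. e -> -. e <. 0%M.
Proof. by move=> /ltN2; rewrite oppr0. Qed.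

Lemma double_inj (y z : M) : y +. y = z +. z -> y = z.
Proof.
by case: (lt_total y z) => [h|[//|h]] e; have := ltD h h; rewrite e => /lt_irrefl.
Qed.

Lemma exists_double_lt (c : M) : 0%M <. c -> exists e, 0%M <. e /\ e +. e <. c.
Proof.
move=> hc; case: (lt_dense hc) => e1 [h1 h2].
case: (min_exists e1 (c +. -. e1)) => e [he1 he2 he].
have epos : 0%M <. e by case: he => ->; last exact: subr_gt0.
have hle : e +. e <=. c by move: (leD he1 he2); rewrite (addC c) addA addN add0.
case: (lt_dense epos) => e' [h4 h5]; exists e'; split => //.
exact: lt_le_trans (ltD h5 h5) hle.
Qed.

Definition coord N (z : 'I_N -> M) (i : nat) : M :=
  if @insub nat (fun j => j < N) 'I_N i is Some o then z o else 0%M.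

Lemma coordE N (z : 'I_N -> M) (o : 'I_N) : coord z o = z o.
Proof. by rewrite /coord valK. Qed.

Lemma coord_lt N (z : 'I_N -> M) i (h : i < N) : coord z i = z (Ordinal h).
Proof. by rewrite -(coordE z). Qed.

Lemma coord_ext N (z1 z2 : 'I_N -> M) :
  (forall i, i < N -> coord z1 i = coord z2 i) -> z1 = z2.
Proof. by move=> H; apply: functional_extensionality => o; rewrite -!coordE H. Qed.

Lemma coord_fun N (g : nat -> M) i : i < N -> coord (fun t : 'I_N => g t) i = g i.
Proof. by move=> h; rewrite (coord_lt _ h). Qed.

Lemma coord_tinit N (z : 'I_N.+1 -> M) i : i < N -> coord (tinit z) i = coord z i.
Proof.
by move=> h; rewrite (coord_lt _ h) /tinit -(coordE z) /= /bump leqNgt h.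
Qed.

Lemma coord_ttail N (z : 'I_N.+1 -> M) i : i < N -> coord (ttail z) i = coord z i.+1.
Proof. by move=> h; rewrite (coord_lt _ h) /ttail -(coordE z). Qed.

Lemma coord_max N (z : 'I_N.+1 -> M) : z ord_max = coord z N.
Proof. by rewrite -(coordE z). Qed.

Lemma coord_ord0 N (z : 'I_N.+1 -> M) : z ord0 = coord z 0.
Proof. by rewrite -(coordE z). Qed.

Lemma coord_tsnoc N (z : 'I_N -> M) y i :
  coord (tsnoc z y) i = if i < N then coord z i else if i == N then y else 0%M.
Proof.
case: (ltngtP i N) => h.
- have h1 : i < N.+1 by lia.
  rewrite (coord_lt _ h1) /tsnoc (coord_lt z h).
  have -> : Ordinal h1 = lift ord_max (Ordinal h).
    by apply: val_inj; rewrite /= /bump leqNgt h.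
  by rewrite liftK.
- by rewrite /coord insubN // -leqNgt.
- subst i; rewrite (coord_lt _ (ltnSn N)) /tsnoc.
  have -> : Ordinal (ltnSn N) = ord_max by apply: val_inj.
  by rewrite unlift_none.
Qed.

Lemma coord_tleft m k (u : 'I_(m + k) -> M) i : i < m -> coord (tleft u) i = coord u i.
Proof. by move=> h; rewrite (coord_lt _ h) /tleft -(coordE u). Qed.

Lemma coord_tright m k (u : 'I_(m + k) -> M) i :
  i < k -> coord (tright u) i = coord u (m + i).
Proof. by move=> h; rewrite (coord_lt _ h) /tright -(coordE u). Qed.

Lemma tsnoc_tinit N (w : 'I_N.+1 -> M) : tsnoc (tinit w) (w ord_max) = w.
Proof.
apply: coord_ext => i hi; rewrite coord_tsnoc coord_max.
case: ifP => h; first by rewrite coord_tinit.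
have -> : i = N by lia.
by rewrite eqxx.
Qed.

Lemma tinit_tsnoc N (w : 'I_N -> M) y : tinit (tsnoc w y) = w.
Proof. by apply: coord_ext => i hi; rewrite coord_tinit // coord_tsnoc hi. Qed.

Lemma tsnoc_max N (w : 'I_N -> M) y : tsnoc w y ord_max = y.
Proof. by rewrite coord_max coord_tsnoc ltnn eqxx. Qed.

Lemma I0_fun_eq (w1 w2 : 'I_0 -> M) : w1 = w2.
Proof. by apply: functional_extensionality => -[]. Qed.

Lemma I1_fun_eta (q : 'I_1 -> M) : q = fun _ => q ord0.
Proof. by apply: functional_extensionality => i; rewrite (ord1 i). Qed.

Definition join m k (p : 'I_m -> M) (v : 'I_k -> M) : 'I_(m + k) -> M :=
  fun i => if i < m then coord p i else coord v (i - m).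

Lemma coord_join m k (p : 'I_m -> M) (v : 'I_k -> M) i : i < m + k ->
  coord (join p v) i = if i < m then coord p i else coord v (i - m).
Proof. by move=> h; rewrite (coord_lt _ h). Qed.

Lemma tleft_join m k (p : 'I_m -> M) (v : 'I_k -> M) : tleft (join p v) = p.
Proof. by apply: coord_ext => i hi; rewrite coord_tleft // coord_join ?hi //; lia. Qed.

Lemma tright_join m k (p : 'I_m -> M) (v : 'I_k -> M) : tright (join p v) = v.
Proof.
apply: coord_ext => i hi; rewrite coord_tright // coord_join; last by lia.
by rewrite ifF ?addKn //; lia.
Qed.

Ltac coord_step := first
  [ rewrite coord_tleft; [|lia] | rewrite coord_tright; [|lia]
  | rewrite coord_tinit; [|lia] | rewrite coord_ttail; [|lia] | rewrite coord_tsnoc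
  | rewrite coord_join; [|lia] | rewrite coord_fun; [|lia]
  | rewrite coord_max | rewrite coord_ord0 ].
Ltac decide_if := match goal with |- context [if ?b then _ else _] =>
  first [rewrite (_ : b = true); last by lia | rewrite (_ : b = false); last by lia] end.
Ltac split_if := match goal with |- context [if ?b then _ else _] =>
  lazymatch b with context [if _ then _ else _] => fail | _ => case: ifP => ? end end.
Ltac coord_simpl := repeat (coord_step || decide_if || split_if).
Ltac coord_done := coord_simpl; try done; try (exfalso; lia); try (congr coord; rewrite /=; lia).

(** * Closure properties of definable sets *)

Lemma Def_ext n (P Q : ('I_n -> M) -> Prop) : (forall x, P x <-> Q x) -> D n P -> D n Q.
Proof.
move=> H; have <- // : P = Q.
by apply: functional_extensionality => x; apply: propositional_extensionality.
Qed.

Lemma Def_and n P Q : D n P -> D n Q -> D n (fun x => P x /\ Q x).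
Proof.
move=> HP HQ; apply: Def_ext (Def_C (Def_U (Def_C HP) (Def_C HQ))) => x.
by split; [move=> H; split; apply: NNPP => ?; apply: H; tauto | tauto].
Qed.

Lemma Def_cast n n' (e : n = n') P : D n P -> D n' (fun x => P (fun i => coord x i)).
Proof.
subst n'; apply: Def_ext => x.
have -> // : (fun i : 'I_n => coord x i) = x.
by apply: functional_extensionality => i; rewrite coordE.
Qed.

Lemma Def_tright N K P : D K P -> D (N + K) (fun u => P (tright u)).
Proof.
elim: N => [|N IH] HP.
  apply: Def_ext HP => x; suff -> : @tright M 0 K x = x by [].
  by apply: coord_ext => i hi; rewrite coord_tright.
apply: Def_ext (Def_prodl (IH HP)) => x /=.
suff -> : tright (ttail x) = @tright M N.+1 K x by [].
by apply: coord_ext => i hi; rewrite !coord_tright // coord_ttail //; lia.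
Qed.

Lemma Def_exists_tright N K (Q : ('I_N -> M) -> ('I_K -> M) -> Prop) :
  D (N + K) (fun u => Q (tleft u) (tright u)) -> D N (fun v => exists w, Q v w).
Proof.
elim: K Q => [|K IH] Q H.
  apply: Def_ext (Def_cast (addn0 N) H) => x.
  have -> : @tleft M N 0 (fun i : 'I_(N + 0) => coord x i) = x.
    by apply: coord_ext => i hi; rewrite coord_tleft // coord_fun // addn0.
  split; first by exists (tright (fun i : 'I_(N + 0) => coord x i)).
  by move=> [w]; congr Q; exact: I0_fun_eq.
pose Q' v w := exists y, Q v (tsnoc w y).
have HK : D (N + K) (fun u => Q' (tleft u) (tright u)).
  apply: Def_ext (Def_proj (Def_cast (addnS N K) H)) => z /=.
  by split => -[y Hy]; exists y; move: Hy; congr Q; apply: coord_ext => i hi; coord_done.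
apply: Def_ext (IH Q' HK) => v; split; first by move=> [w [y Hy]]; exists (tsnoc w y).
by move=> [w Hw]; exists (tinit w), (w ord_max); rewrite tsnoc_tinit.
Qed.

Lemma Def_forall_fin N K (F : 'I_K -> ('I_N -> M) -> Prop) :
  (forall i, D N (F i)) -> D N (fun z => forall i, F i z).
Proof.
elim: K F => [|K IH] F H.
  by apply: Def_ext (Def_T M N) => z; split => // _ [].
apply: Def_ext (Def_and (H ord0) (IH (fun i => F (lift ord0 i)) (fun i => H _))) => z.
split; last by move=> Hz; split.
by move=> [H0 Hs] i; case: (unliftP ord0 i) => [j ->|->].
Qed.

Lemma Def_reindex N K (f : nat -> nat) P : (forall j, j < K -> f j < N) -> D K P ->
  D N (fun z => P (fun t : 'I_K => coord z (f t))).
Proof.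
move=> hf HP.
pose Q (v : 'I_N -> M) (w : 'I_K -> M) := (forall t : 'I_K, w t = coord v (f t)) /\ P w.
have HQ : D (N + K) (fun u => Q (tleft u) (tright u)).
  have Heq := @Def_forall_fin (N + K) K (fun t u =>
      u (rshift N t) = u (Ordinal (ltn_addr K (hf t (ltn_ord t))))) (fun t => Def_diag _ _ _).
  apply: Def_ext (Def_and Heq (Def_tright N HP)) => u.
  have E (t : 'I_K) : coord (tleft u) (f t) = u (Ordinal (ltn_addr K (hf t (ltn_ord t)))).
    by rewrite coord_tleft ?hf // -(coordE u).
  split => -[Ha Hb]; split => // t; first by rewrite E /tright Ha.
  by rewrite -E; exact: Ha.
apply: Def_ext (Def_exists_tright HQ) => z; split.
  by move=> [w [Hw Pw]]; move: Pw; congr P; apply: functional_extensionality.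
by move=> Pz; exists (fun t : 'I_K => coord z (f t)).
Qed.

Lemma Def_const_at N i a : i < N -> D N (fun z => coord z i = a).
Proof.
by move=> h; exact: Def_ext (@Def_reindex N 1 (fun _ => i) _ (fun _ _ => h) (Def_const a)).
Qed.

Lemma Def_eq_at N i j : i < N -> j < N -> D N (fun z => coord z i = coord z j).
Proof.
move=> hi hj; have hf t : t < 2 -> (if t == 0 then i else j) < N by case: t.
exact: Def_ext (Def_reindex hf (Def_diag M ord0 ord_max)).
Qed.

Lemma Def_lt_at N i j : i < N -> j < N -> D N (fun z => coord z i <. coord z j).
Proof.
move=> hi hj; have hf t : t < 2 -> (if t == 0 then i else j) < N by case: t.
exact: Def_ext (Def_reindex hf (Def_lt M)).
Qed.

Lemma Def_add_at N i j k : i < N -> j < N -> k < N ->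
  D N (fun z => coord z k = coord z i +. coord z j).
Proof.
move=> hi hj hk.
have hf t : t < 3 -> (if t == 0 then i else if t == 1 then j else k) < N by case: t => [|[]].
exact: Def_ext (Def_reindex hf (Def_add M)).
Qed.

Lemma Def_pos_at N i : i < N -> D N (fun z => 0%M <. coord z i).
Proof.
move=> hi; have hN : N < N.+1 by [].
apply: Def_ext (Def_proj (Def_and (Def_const_at 0%M hN) (Def_lt_at hN (leqW hi)))) => z.
by rewrite /=; split; [move=> [y]; coord_simpl => -[-> h]|exists 0%M; coord_simpl].
Qed.

Lemma Def_section m k (p : 'I_m -> M) (F : ('I_(m + k) -> M) -> Prop) :
  D (m + k) F -> D k (fun v => F (join p v)).
Proof.
move=> HF.
pose Q (v : 'I_k -> M) (q : 'I_m -> M) := (forall i : 'I_m, q i = p i) /\ F (join q v).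
have HQ : D (k + m) (fun u => Q (tleft u) (tright u)).
  have Hp := @Def_forall_fin (k + m) m (fun i u => coord u (k + i) = p i)
     (fun i => @Def_const_at (k + m) (k + i) (p i) ltac:(by rewrite ltn_add2l)).
  have hf j : j < m + k -> (if j < m then k + j else j - m) < k + m by case: ifP; lia.
  apply: Def_ext (Def_and Hp (Def_reindex hf HF)) => u.
  have -> : (fun t : 'I_(m + k) => coord u (if t < m then k + t else t - m))
            = join (tright u) (tleft u).
    apply: coord_ext => i hi.
    rewrite (coord_fun (fun j => coord u (if j < m then k + j else j - m))) //.
    by coord_done.
  by split => -[Ha Hb]; split => // i; rewrite -?Ha /tright -(coordE u) ?Ha.
apply: Def_ext (Def_exists_tright HQ) => v; split.
  by move=> [q [Hq Fq]]; have -> : p = q by apply: functional_extensionality => i; rewrite Hq.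
by move=> Fp; exists p.
Qed.

(** * First-order formulas *)

(* A point of [M^(n + m)] lists the [m] parameters first, then the [n] bound
   variables, innermost last: de Bruijn index [i] is coordinate [n + m - i.+1]. *)
Definition params n m (z : 'I_(n + m) -> M) : 'I_m -> M := fun t => coord z t.
Definition env n m (z : 'I_(n + m) -> M) : nat -> M :=
  fun i => if i < n then coord z (n + m - i.+1) else 0%M.
Arguments params n m z _ : clear implicits.
Arguments env n m z _ : clear implicits.

Definition def_rel1 m (P : ('I_m -> M) -> M -> Prop) :=
  D (1 + m) (fun z => P (params 1 m z) (env 1 m z 0)).
Definition def_rel2 m (P : ('I_m -> M) -> M -> M -> Prop) :=
  D (2 + m) (fun z => P (params 2 m z) (env 2 m z 1) (env 2 m z 0)).

Inductive formula (m : nat) : Type :=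
| FTrue | FNot of formula m | FAnd of formula m & formula m
| FOr of formula m & formula m | FImp of formula m & formula m
| FEx of formula m | FAll of formula m
| FLe of nat & nat | FLt of nat & nat | FEq of nat & nat
| FAdd of nat & nat & nat | FConst of nat & M
| FRel1 (P : ('I_m -> M) -> M -> Prop) of def_rel1 P & nat
| FRel2 (P : ('I_m -> M) -> M -> M -> Prop) of def_rel2 P & nat & nat.
Arguments FTrue {m}. Arguments FNot {m}. Arguments FAnd {m}. Arguments FOr {m}.
Arguments FImp {m}. Arguments FEx {m}. Arguments FAll {m}. Arguments FLe {m}.
Arguments FLt {m}. Arguments FEq {m}. Arguments FAdd {m}. Arguments FConst {m}.
Arguments FRel1 {m P}. Arguments FRel2 {m P}.

Definition scons (y : M) (e : nat -> M) : nat -> M :=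
  fun i => if i is i'.+1 then e i' else y.

Fixpoint holds m (p : 'I_m -> M) (e : nat -> M) (f : formula m) : Prop :=
  match f with
  | FTrue => True
  | FNot g => ~ holds p e g
  | FAnd g h => holds p e g /\ holds p e h
  | FOr g h => holds p e g \/ holds p e h
  | FImp g h => holds p e g -> holds p e h
  | FEx g => exists y, holds p (scons y e) g
  | FAll g => forall y, holds p (scons y e) g
  | FLe i j => e i <=. e j
  | FLt i j => e i <. e j
  | FEq i j => e i = e j
  | FAdd i j k => e k = e i +. e j
  | FConst i a => e i = a
  | FRel1 P _ i => P p (e i)
  | FRel2 P _ i j => P p (e i) (e j)
  end.

Fixpoint scoped m (n : nat) (f : formula m) : Prop :=
  match f with
  | FTrue => True
  | FNot g => scoped n g
  | FAnd g h | FOr g h | FImp g h => scoped n g /\ scoped n h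
  | FEx g | FAll g => scoped n.+1 g
  | FLe i j | FLt i j | FEq i j | FRel2 _ _ i j => i < n /\ j < n
  | FAdd i j k => [/\ i < n, j < n & k < n]
  | FConst i _ | FRel1 _ _ i => i < n
  end.

Lemma coord_params n m (z : 'I_(n + m) -> M) t : t < m -> coord (params n m z) t = coord z t.
Proof. by move=> h; rewrite /params (coord_fun (fun k => coord z k)). Qed.

Lemma env_lt n m (z : 'I_(n + m) -> M) i : i < n -> env n m z i = coord z (n + m - i.+1).
Proof. by move=> h; rewrite /env h. Qed.

Lemma params_tsnoc n m (z : 'I_(n + m) -> M) y : params n.+1 m (tsnoc z y) = params n m z.
Proof.
by apply: coord_ext => i hi; rewrite !coord_params // (@coord_tsnoc (n + m)) ifT //; lia.
Qed.

Lemma env_tsnoc n m (z : 'I_(n + m) -> M) y : env n.+1 m (tsnoc z y) = scons y (env n m z).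
Proof.
apply: functional_extensionality => -[|i] /=; rewrite /env (@coord_tsnoc (n + m)).
  by rewrite ltn0Sn ifF ?ifT //; lia.
by case: ifP => h; [rewrite !ifT|rewrite ifF] => //; lia.
Qed.

Lemma Def_rel1_env m (P : ('I_m -> M) -> M -> Prop) n i : i < n -> def_rel1 P ->
  D (n + m) (fun z => P (params n m z) (env n m z i)).
Proof.
move=> hi HP; pose f j := if j < m then j else n + m - i.+1.
have hf j : j < 1 + m -> f j < n + m by rewrite /f; case: ifP; lia.
apply: Def_ext (Def_reindex hf HP) => z.
have Ef j : j < 1 + m -> coord (fun t : 'I_(1 + m) => coord z (f t)) j = coord z (f j).
  by move=> hj; rewrite (coord_fun (fun k => coord z (f k))).
have -> : params 1 m (fun t : 'I_(1 + m) => coord z (f t)) = params n m z.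
  by apply: coord_ext => t ht; rewrite !coord_params // Ef /f ?ht //; lia.
rewrite !env_lt // Ef /f; try lia.
by repeat decide_if.
Qed.

Lemma Def_rel2_env m (P : ('I_m -> M) -> M -> M -> Prop) n i j : i < n -> j < n ->
  def_rel2 P -> D (n + m) (fun z => P (params n m z) (env n m z i) (env n m z j)).
Proof.
move=> hi hj HP.
pose f k := if k < m then k else if k == m then n + m - i.+1 else n + m - j.+1.
have hf k : k < 2 + m -> f k < n + m by rewrite /f; case: ifP; [|case: ifP]; lia.
apply: Def_ext (Def_reindex hf HP) => z.
have Ef k : k < 2 + m -> coord (fun t : 'I_(2 + m) => coord z (f t)) k = coord z (f k).
  by move=> hk; rewrite (coord_fun (fun l => coord z (f l))).
have -> : params 2 m (fun t : 'I_(2 + m) => coord z (f t)) = params n m z.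
  by apply: coord_ext => t ht; rewrite !coord_params // Ef /f ?ht //; lia.
rewrite !env_lt // !Ef /f; try lia.
by repeat decide_if.
Qed.

Theorem Def_holds m (f : formula m) n : scoped n f ->
  D (n + m) (fun z => holds (params n m z) (env n m z) f).
Proof.
elim: f n => [|g IH|g IHg h IHh|g IHg h IHh|g IHg h IHh|g IH|g IH
  |i j|i j|i j|i j k|i a|P HP i|P HP i j] n /= sc.
- exact: Def_T.
- exact: Def_C (IH n sc).
- by case: sc => s1 s2; exact: Def_and (IHg n s1) (IHh n s2).
- by case: sc => s1 s2; exact: Def_U (IHg n s1) (IHh n s2).
- case: sc => s1 s2; apply: Def_ext (Def_U (Def_C (IHg n s1)) (IHh n s2)) => z.
  by split => [[H /H|H]|H] //; apply: imply_to_or.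
- apply: Def_ext (Def_proj (IH n.+1 sc)) => z.
  by split => -[y Hy]; exists y; move: Hy; rewrite params_tsnoc env_tsnoc.
- apply: Def_ext (Def_C (Def_proj (Def_C (IH n.+1 sc)))) => z.
  split; last by move=> H [y]; rewrite params_tsnoc env_tsnoc; apply.
  by move=> H y; apply: NNPP => Hn; apply: H; exists y; rewrite params_tsnoc env_tsnoc.
- case: sc => si sj; have hi : n + m - i.+1 < n + m by lia.
  have hj : n + m - j.+1 < n + m by lia.
  by apply: Def_ext (Def_U (Def_lt_at hi hj) (Def_eq_at hi hj)) => z; rewrite !env_lt.
- case: sc => si sj; apply: Def_ext (@Def_lt_at (n + m) (n + m - i.+1) (n + m - j.+1) _ _);
    try lia; by move=> z; rewrite !env_lt.
- case: sc => si sj; apply: Def_ext (@Def_eq_at (n + m) (n + m - i.+1) (n + m - j.+1) _ _);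
    try lia; by move=> z; rewrite !env_lt.
- case: sc => si sj sk;
  apply: Def_ext (@Def_add_at (n + m) (n + m - i.+1) (n + m - j.+1) (n + m - k.+1) _ _ _);
    try lia; by move=> z; rewrite !env_lt.
- apply: Def_ext (@Def_const_at (n + m) (n + m - i.+1) a _); try lia.
  by move=> z; rewrite !env_lt.
- exact: Def_rel1_env.
- by case: sc => si sj; apply: Def_rel2_env.
Qed.

Definition zeros : nat -> M := fun _ => 0%M.
Definition rel1 m (f : formula m) (p : 'I_m -> M) (t : M) := holds p (scons t zeros) f.
Definition rel2 m (f : formula m) (p : 'I_m -> M) (a b : M) :=
  holds p (scons b (scons a zeros)) f.

Lemma def_rel1_holds m (f : formula m) : scoped 1 f -> def_rel1 (rel1 f).
Proof.
move=> sc; apply: Def_ext (Def_holds sc) => z; rewrite /rel1.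
by have -> : env 1 m z = scons (env 1 m z 0) zeros by apply: functional_extensionality => -[].
Qed.

Lemma def_rel2_holds m (f : formula m) : scoped 2 f -> def_rel2 (rel2 f).
Proof.
move=> sc; apply: Def_ext (Def_holds sc) => z; rewrite /rel2.
have -> // : env 2 m z = scons (env 2 m z 0) (scons (env 2 m z 1) zeros).
by apply: functional_extensionality => -[|[]].
Qed.

Lemma params1 m (z : 'I_(1 + m) -> M) : params 1 m z = tinit z.
Proof. by apply: coord_ext => i hi; rewrite coord_params // coord_tinit. Qed.

Lemma env1 m (z : 'I_(1 + m) -> M) : env 1 m z 0 = z ord_max.
Proof. by rewrite env_lt // coord_max; congr coord; lia. Qed.

Lemma def_rel1_tinit m (W : ('I_m -> M) -> M -> Prop) :
  D m.+1 (fun z => W (tinit z) (z ord_max)) <-> def_rel1 W.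
Proof. by split; apply: Def_ext => z; rewrite params1 env1. Qed.

Lemma Def_rel1_section m (p : 'I_m -> M) (P : ('I_m -> M) -> M -> Prop) :
  def_rel1 P -> D 1 (fun v => P p (v ord0)).
Proof.
move=> H; apply: Def_ext (Def_section p (Def_cast (addnC 1 m) H)) => v.
set z := fun i : 'I_(1 + m) => coord (join p v) i.
have -> : params 1 m z = p.
  by apply: coord_ext => i hi; rewrite coord_params // /z; coord_done.
by rewrite env_lt // /z; coord_done; rewrite (_ : 1 + m - 1 - m = 0) ?coordE //; lia.
Qed.

Lemma Def_rel2_section m (p : 'I_m -> M) a (P : ('I_m -> M) -> M -> M -> Prop) :
  def_rel2 P -> D 1 (fun v => P p a (v ord0)).
Proof.
move=> H; have e : 2 + m = m.+1 + 1 by lia.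
apply: Def_ext (Def_section (tsnoc p a) (Def_cast e H)) => v.
set z := fun i : 'I_(2 + m) => coord (join (tsnoc p a) v) i.
have -> : params 2 m z = p.
  by apply: coord_ext => i hi; rewrite coord_params // /z; coord_done.
rewrite !env_lt // /z; coord_done.
by rewrite (_ : 2 + m - 1 - m.+1 = 0) ?coordE //; lia.
Qed.

(** * Definable completeness and local o-minimality *)

Definition is_inf (Y : M -> Prop) a :=
  (forall t, Y t -> a <=. t) /\ (forall u, (forall t, Y t -> u <=. t) -> u <=. a).
Definition is_sup (Y : M -> Prop) s :=
  (forall t, Y t -> t <=. s) /\ (forall u, (forall t, Y t -> t <=. u) -> s <=. u).

Lemma is_inf_unique Y a a' : is_inf Y a -> is_inf Y a' -> a = a'.
Proof. by move=> [h1 h2] [h3 h4]; apply: le_anti; [apply: h4|apply: h2]. Qed.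

Lemma is_sup_unique Y s s' : is_sup Y s -> is_sup Y s' -> s = s'.
Proof. by move=> [h1 h2] [h3 h4]; apply: le_anti; [apply: h2|apply: h4]. Qed.

Lemma exists_inf (Y : M -> Prop) : D 1 (fun v => Y (v ord0)) ->
  (exists y, Y y) -> (exists u, forall y, Y y -> u <=. y) -> exists a, is_inf Y a.
Proof. by move=> DY ne lb; case: (def_inf DY ne lb) => a; exists a. Qed.

Lemma exists_sup (Y : M -> Prop) : D 1 (fun v => Y (v ord0)) ->
  (exists y, Y y) -> (exists u, forall y, Y y -> y <=. u) -> exists s, is_sup Y s.
Proof. by move=> DY ne ub; case: (def_sup DY ne ub) => s; exists s. Qed.

Lemma Def_double_lt (g : M) : D 1 (fun v => v ord0 +. v ord0 <. g).
Proof.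
pose f : formula 0 := FEx (FAnd (FAdd 1 1 0) (FEx (FAnd (FConst 0 g) (FLt 1 0)))).
have sc : scoped 1 f by do ! split.
apply: Def_ext (Def_rel1_section (fun i : 'I_0 => 0%M) (def_rel1_holds sc)) => v.
rewrite /rel1 /f /=.
split; first by move=> [s [-> [c [-> h]]]].
by move=> h; exists (v ord0 +. v ord0); split => //; exists g.
Qed.

(* [h] is the supremum of [{y | y + y < g}]. *)
Lemma exists_half (g : M) : 0%M <. g -> exists h, h +. h = g.
Proof.
move=> hg.
have ub : exists u, forall y, y +. y <. g -> y <=. u.
  exists g => y hy; apply: nlt_le => hgy.
  by apply: (lt_asym hy); apply: lt_trans (lt_addr g hg) (ltD hgy hgy).
have ne : exists y, y +. y <. g by exists 0%M; rewrite add0.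
have [s [Hs1 Hs2]] := exists_sup (Def_double_lt g) ne ub.
exists s; case: (lt_total (s +. s) g) => [h|[//|h]].
- case: (exists_double_lt (subr_gt0 h)) => e [e0 he].
  have : (s +. e) +. (s +. e) <. g.
    rewrite addrACA; apply: lt_le_trans (ltD2l _ he) _.
    by rewrite (addC g) addA addN add0; right.
  by move=> /Hs1 /le_nlt; case; exact: lt_addr.
- case: (exists_double_lt (subr_gt0 h)) => e [e0 he].
  have ub' : forall y, y +. y <. g -> y <=. s +. -. e.
    move=> y hy; apply: nlt_le => hy'.
    have h1 := ltD hy' hy'; rewrite addrACA -opprD in h1.
    have h2 := ltD2l (s +. s) (ltN2 he).
    rewrite opprD opprK addA addN add0 in h2.
    by apply: (lt_asym hy); apply: lt_trans h2 h1.
  move: (Hs2 _ ub') => /le_nlt; case.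
  by move: (ltD2l s (oppr_lt0 e0)); rewrite addr0.
Qed.

Lemma exists_midpoint (a b : M) : a <. b -> exists y, [/\ a <. y, y <. b & y +. y = a +. b].
Proof.
move=> hab; case: (exists_half (subr_gt0 hab)) => h hh.
have h0 : 0%M <. h.
  apply: NNPP => /nlt_le hn; apply: (@lt_irrefl M 0%M).
  apply: lt_le_trans (subr_gt0 hab) _.
  by rewrite -hh -[X in _ <=. X](add0 0%M); exact: leD.
exists (a +. h); split.
- exact: lt_addr.
- have : a +. h <. a +. (h +. h) by apply: ltD2l; exact: lt_addr.
  by rewrite hh (addC b) addA addN add0.
- by rewrite addrACA hh (addC b) addA addrK.
Qed.

Lemma finite_gap_above k (F : 'I_k -> M) (a c : M) : a <. c ->
  exists e, [/\ a <. e, e <=. c & forall i, a <. F i -> e <=. F i].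
Proof.
elim: k F => [|k IH] F hac; first by exists c; split => //; [right|case].
case: (IH (fun i => F (lift ord0 i)) hac) => e1 [h1 h2 h3].
have Hlift e : (forall j, a <. F (lift ord0 j) -> e <=. F (lift ord0 j)) ->
    (a <. F ord0 -> e <=. F ord0) -> forall i, a <. F i -> e <=. F i.
  by move=> Hj H0 i; case: (unliftP ord0 i) => [j ->|->]; [apply: Hj|].
case: (classic (a <. F ord0)) => h0; last by exists e1; split => //; apply: Hlift => // /h0.
case: (min_exists e1 (F ord0)) => e [he1 he2 he].
exists e; split; [by case: he => ->|exact: le_trans he1 h2|apply: Hlift => // j].
by move=> /h3; apply: le_trans.
Qed.

Lemma inf_notin_interval (Y : M -> Prop) a : D 1 (fun v => Y (v ord0)) ->
  is_inf Y a -> ~ Y a -> exists e, a <. e /\ forall t, a <. t -> t <. e -> Y t.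
Proof.
move=> DY [Hlb Hglb] Ya.
case: (loc_omin DY a) => c [d [hca [had [k [pts [l [lo [hi [hlh H]]]]]]]]].
case: (classic (exists j, lo j <=. a /\ a <. hi j)) => [[j [hj1 hj2]]|hno].
  case: (min_exists (hi j) d) => e [he1 he2 he].
  exists e; split; first by case: he => ->.
  move=> t hat hte; apply/(H t (lt_trans hca hat) (lt_le_trans hte he2)).
  by right; exists j; split; [exact: le_lt_trans hj1 hat|exact: lt_le_trans hte he1].
(* Otherwise points of [Y] above [a] and below [d] lie above some point or left
   endpoint exceeding [a], which yields a lower bound of [Y] larger than [a]. *)
case: (finite_gap_above pts had) => e1 [he1 he1d he1p].
case: (finite_gap_above lo he1) => e2 [hae2 he2e1 he2l].
suff /le_nlt [] : e2 <=. a by [].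
apply: Hglb => y Yy; apply: nlt_le => hy.
have hay : a <. y by case: (Hlb y Yy) => // eay; subst y.
have hyd : y <. d by apply: lt_le_trans hy (le_trans he2e1 he1d).
case: ((H y (lt_trans hca hay) hyd).1 Yy) => [[i ei]|[j [hj1 hj2]]].
  by subst y; move: (he1p i hay) => /le_nlt; apply; exact: lt_le_trans hy he2e1.
case: (classic (a <. lo j)) => hal.
  by move: (he2l j hal) => /le_nlt; apply; exact: lt_trans hj1 hy.
by apply: hno; exists j; split; [exact: nlt_le|exact: lt_trans hay hj2].
Qed.

(** * Definable choice *)

Section ChoiceOneVariable.
Variables (m : nat) (W : ('I_m -> M) -> M -> Prop) (HW : def_rel1 W).
Variables (c0 : M) (Hc0 : 0%M <. c0).

Definition absW_formula : formula m :=
  FEx (FAnd (FRel1 HW 0) (FEx (FAnd (FConst 0 0%M)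
     (FOr (FAnd (FLe 0 1) (FEq 2 1)) (FAnd (FLt 1 0) (FAdd 1 2 0)))))).
Definition absW := rel1 absW_formula.
Let HabsW := def_rel1_holds (ltac:(by do ! split) : scoped 1 absW_formula).

Lemma absW_iff p t : absW p t <->
  exists u, W p u /\ ((0%M <=. u /\ t = u) \/ (u <. 0%M /\ 0%M = u +. t)).
Proof.
rewrite /absW /rel1 /=; split; first by move=> [u [Wu [z [-> H]]]]; exists u.
by move=> [u [Wu H]]; exists u; split => //; exists 0%M.
Qed.

Definition absW_interval_formula : formula m :=
  FAnd (FLt 1 0) (FAnd (FEx (FAnd (FEx (FAnd (FConst 0 c0) (FAdd 3 0 1))) (FLe 1 0)))
     (FAll (FImp (FAnd (FLt 2 0) (FLt 0 1)) (FRel1 HabsW 0)))).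
Definition absW_interval := rel2 absW_interval_formula.
Let HabsW_interval :=
  def_rel2_holds (ltac:(by do ! split) : scoped 2 absW_interval_formula).

Lemma absW_interval_iff p a e : absW_interval p a e <->
  [/\ a <. e, e <=. a +. c0 & forall t, a <. t -> t <. e -> absW p t].
Proof.
rewrite /absW_interval /rel2 /=; split.
  by move=> [h1 [[c [[k [-> ->]] h2]] h3]]; split => // t h4 h5; apply: h3.
move=> [h1 h2 h3]; do 2 split => //; first by exists (a +. c0); split => //; exists c0.
by move=> t [h4 h5]; apply: h3.
Qed.

Definition absW_point_formula : formula m :=
  FEx (FAnd
   (FAnd (FAll (FImp (FRel1 HabsW 0) (FLe 1 0)))
         (FAll (FImp (FAll (FImp (FRel1 HabsW 0) (FLe 1 0))) (FLe 0 1))))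
   (FOr (FAnd (FRel1 HabsW 0) (FEq 1 0))
        (FAnd (FNot (FRel1 HabsW 0))
              (FEx (FAnd
                  (FAnd (FAll (FImp (FRel2 HabsW_interval 2 0) (FLe 0 1)))
                        (FAll (FImp (FAll (FImp (FRel2 HabsW_interval 3 0) (FLe 0 1)))
                                    (FLe 1 0))))
                  (FEx (FAnd (FAdd 3 3 0) (FAdd 2 1 0)))))))).
Definition absW_point := rel1 absW_point_formula.
Let HabsW_point := def_rel1_holds (ltac:(by do ! split) : scoped 1 absW_point_formula).

Lemma absW_point_iff p w : absW_point p w <-> exists a, is_inf (absW p) a /\
  ((absW p a /\ w = a) \/
   (~ absW p a /\ exists s, is_sup (absW_interval p a) s /\ w +. w = a +. s)).
Proof.
rewrite /absW_point /rel1 /=; split.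
  move=> [a [[h1 h2] H]]; exists a; split; first by split.
  case: H => [[h3 h4]|[h3 [s [[h4 h5] [q [h6 h7]]]]]]; first by left.
  by right; split => //; exists s; split; [split|rewrite -h6 -h7].
move=> [a [[h1 h2] H]]; exists a; split; first by split.
case: H => [[h3 h4]|[h3 [s [[h4 h5] h6]]]]; first by left.
by right; split => //; exists s; split; [split|exists (w +. w)].
Qed.

Definition W_point_formula : formula m :=
  FEx (FAnd (FRel1 HabsW_point 0) (FOr (FAnd (FRel1 HW 0) (FEq 1 0))
     (FAnd (FNot (FRel1 HW 0)) (FEx (FAnd (FConst 0 0%M) (FAdd 1 2 0)))))).
Definition W_point := rel1 W_point_formula.
Let HW_point := def_rel1_holds (ltac:(by do ! split) : scoped 1 W_point_formula).

Lemma W_point_iff p y : W_point p y <-> exists w, absW_point p w /\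
  ((W p w /\ y = w) \/ (~ W p w /\ 0%M = w +. y)).
Proof.
rewrite /W_point /rel1 /=; split.
  by move=> [w [h1 [h2|[h2 [z [-> h3]]]]]]; exists w; split => //; [left|right].
by move=> [w [h1 [h2|[h2 h3]]]]; exists w; split => //; [left|right; split => //; exists 0%M].
Qed.

Lemma absW_ge0 p t : absW p t -> 0%M <=. t.
Proof.
move=> /absW_iff [u [_ [[h ->]|[h e]]]] //.
apply: nlt_le => ht; apply: (@lt_irrefl M 0%M); rewrite {1}e.
by apply: lt_trans (lt_add t h) _; rewrite add0.
Qed.

Lemma absW_nonempty p : (exists t, W p t) -> exists t, absW p t.
Proof.
move=> [t Wt]; case: (classic (t <. 0%M)) => h.
  by exists (-. t); apply/absW_iff; exists t; split => //; right; rewrite addN.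
by exists t; apply/absW_iff; exists t; split => //; left; split => //; apply: nlt_le.
Qed.

Lemma absW_point_exists p : (exists t, W p t) -> exists w, absW_point p w /\ absW p w.
Proof.
move=> /absW_nonempty ne.
have DV : D 1 (fun v => absW p (v ord0)) := Def_rel1_section p HabsW.
have [a Ia] : exists a, is_inf (absW p) a.
  by apply: exists_inf DV ne _; exists 0%M => y /absW_ge0.
case: (classic (absW p a)) => Va.
  by exists a; split => //; apply/absW_point_iff; exists a; split => //; left.
case: (inf_notin_interval DV Ia Va) => e [hae He].
case: (min_exists e (a +. c0)) => e' [he1 he2 he].
have hae' : a <. e' by case: he => ->; [|apply: lt_addr].
have Ee' : absW_interval p a e'.
  by apply/absW_interval_iff; split => // t h1 h2; apply: He => //; apply: lt_le_trans h2 he1.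
have [s [Hs1 Hs2]] : exists s, is_sup (absW_interval p a) s.
  apply: exists_sup (Def_rel2_section p a HabsW_interval) (ex_intro _ e' Ee') _.
  by exists (a +. c0) => y /absW_interval_iff [].
have has : a <. s by apply: lt_le_trans hae' (Hs1 _ Ee').
case: (exists_midpoint has) => w [h1 h2 h3].
have Vw : absW p w.
  apply: NNPP => nVw; suff /le_nlt : s <=. w by [].
  apply: Hs2 => y /absW_interval_iff [_ _ Ey]; apply: nlt_le => hwy.
  exact/nVw/Ey.
exists w; split => //; apply/absW_point_iff; exists a; split => //.
by right; split => //; exists s.
Qed.

Lemma absW_point_unique p w1 w2 : absW_point p w1 -> absW_point p w2 -> w1 = w2.
Proof.
move=> /absW_point_iff [a1 [I1 H1]] /absW_point_iff [a2 [I2 H2]].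
have e := is_inf_unique I1 I2; subst a2.
case: H1 => [[V1 ->]|[V1 [s1 [S1 e1]]]]; case: H2 => [[V2 ->]|[V2 [s2 [S2 e2]]]] //;
  try by [case: V2|case: V1].
have e := is_sup_unique S1 S2; subst s2; exact: double_inj (etrans e1 (esym e2)).
Qed.

Lemma W_point_spec p : (exists t, W p t) ->
  exists y, [/\ W_point p y, W p y & forall y', W_point p y' -> y' = y].
Proof.
move=> ne; case: (absW_point_exists ne) => w [Pw Vw].
have Uw w' : absW_point p w' -> w' = w by move=> h; apply: absW_point_unique h Pw.
case: (proj1 (absW_iff p w) Vw) => u [Wu Hu].
case: (classic (W p w)) => Ww.
  exists w; split => //; first by apply/W_point_iff; exists w; split => //; left.
  move=> y' /W_point_iff [w' [h1 [[_ ->]|[h2 _]]]]; first exact: Uw.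
  by case: h2; rewrite (Uw _ h1).
have [hu e] : u <. 0%M /\ 0%M = u +. w by case: Hu => [[_ e]|//]; case: Ww; rewrite e.
exists u; split => //; first by apply/W_point_iff; exists w; split => //; right; rewrite addC.
move=> y' /W_point_iff [w' [h1 H]]; rewrite (Uw _ h1) in H.
case: H => [[h2 _]|[_ e']] //; apply: (@addrI _ _ w).
by rewrite -e' (addC w u) -e.
Qed.

Definition select (p : 'I_m -> M) : M := epsilon (inhabits 0%M) (W_point p).

Lemma select_spec p : (exists t, W p t) ->
  [/\ W p (select p), W_point p (select p) & forall y, W_point p y -> y = select p].
Proof.
move=> ne; case: (W_point_spec ne) => y [h1 h2 h3].
have hs : W_point p (select p) by apply: epsilon_spec; exists y.
by rewrite (h3 _ hs).
Qed.

Lemma Def_select_graph :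
  def_rel1 (fun p y => (exists t, W p t) /\ y = select p).
Proof.
pose f : formula m := FAnd (FEx (FRel1 HW 0)) (FRel1 HW_point 0).
have sc : scoped 1 f by do ! split.
apply: Def_ext (def_rel1_holds sc) => z; rewrite /rel1 /f /=.
split; first by move=> [ne Hy]; split => //; case: (select_spec ne) => _ _; apply.
by move=> [ne ->]; split => //; case: (select_spec ne).
Qed.

End ChoiceOneVariable.

Lemma definable_choice1 m (W : ('I_m -> M) -> M -> Prop) :
  D m.+1 (fun z => W (tinit z) (z ord_max)) ->
  exists g : ('I_m -> M) -> M, (forall p, (exists t, W p t) -> W p (g p)) /\
    D m.+1 (fun z => (exists t, W (tinit z) t) /\ z ord_max = g (tinit z)).
Proof.
move=> /def_rel1_tinit HW; case: (no_max (0%M : M)) => c0 Hc0.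
exists (select HW c0); split; first by move=> p /(select_spec HW Hc0) [].
apply/(def_rel1_tinit (fun p y => (exists t, W p t) /\ y = select HW c0 p)).
exact: Def_select_graph.
Qed.

Lemma join_tleft_tright m k (u : 'I_(m + k) -> M) : join (tleft u) (tright u) = u.
Proof. by apply: coord_ext => i hi; coord_done. Qed.

Lemma Def_split_last m k (P : ('I_m -> M) -> ('I_k.+1 -> M) -> Prop) :
  D (m + k.+1) (fun u => P (tleft u) (tright u)) <->
  D (m + k).+1 (fun x => P (tleft (tinit x)) (tsnoc (tright (tinit x)) (x ord_max))).
Proof.
have e : m + k.+1 = (m + k).+1 by rewrite addnS.
split => H.
  apply: Def_ext (Def_cast e H) => x.
  rewrite (_ : tleft _ = tleft (tinit x)); last by apply: coord_ext => i hi; coord_done.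
  rewrite (_ : tright _ = tsnoc (tright (tinit x)) (x ord_max)) //.
  by apply: coord_ext => i hi; coord_done.
apply: Def_ext (Def_cast (esym e) H) => u.
rewrite (_ : tleft _ = tleft u); last by apply: coord_ext => i hi; coord_done.
rewrite (_ : tsnoc _ _ = tright u) //.
by apply: coord_ext => i hi; coord_done.
Qed.

Theorem definable_choice k : forall m (S : ('I_m -> M) -> ('I_k -> M) -> Prop),
  D (m + k) (fun u => S (tleft u) (tright u)) ->
  exists f : ('I_m -> M) -> ('I_k -> M), (forall p, (exists w, S p w) -> S p (f p)) /\
    D (m + k) (fun u => (exists w, S (tleft u) w) /\ tright u = f (tleft u)).
Proof.
elim: k => [|k IH] m S H.
  exists (fun _ (i : 'I_0) => 0%M); split.
    by move=> p [w]; congr S; apply: I0_fun_eq.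
  apply: Def_ext H => u; split; first by move=> Su; split; [exists (tright u)|apply: I0_fun_eq].
  by move=> [[w] + _]; congr S; apply: I0_fun_eq.
move/Def_split_last: H => H.
pose S' p w' := exists t, S p (tsnoc w' t).
have HS' : D (m + k) (fun u => S' (tleft u) (tright u)).
  apply: Def_ext (Def_proj H) => u /=.
  by split => -[y Hy]; exists y; move: Hy; rewrite tinit_tsnoc tsnoc_max.
case: (IH m S' HS') => f' [hf' Gf'].
pose T q t := S (tleft q) (tsnoc (tright q) t).
case: (@definable_choice1 _ T H) => g [hg Gg].
pose f p := tsnoc (f' p) (g (join p (f' p))).
have hf p : (exists w, S p w) -> S p (f p).
  move=> [w Sw]; have [t St] : S' p (f' p).
    by apply: hf'; exists (tinit w), (w ord_max); rewrite tsnoc_tinit.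
  have : T (join p (f' p)) (g (join p (f' p))).
    by apply: hg; exists t; rewrite /T tleft_join tright_join.
  by rewrite /T tleft_join tright_join.
exists f; split => //.
apply/(Def_split_last (fun p w => (exists w, S p w) /\ w = f p)).
apply: Def_ext (Def_and (Def_prodr Gf') Gg) => x /=.
move: (tinit x) (x ord_max) => q y; rewrite /T /f; split.
- move=> [[_ e1] [[t Tt] e2]]; split; first by exists (tsnoc (tright q) t).
  by rewrite -e1 join_tleft_tright -e2.
- move=> [[w Sw] E].
  have e1 : tright q = f' (tleft q) by have := congr1 (@tinit M k) E; rewrite !tinit_tsnoc.
  have := congr1 (fun w => w ord_max) E; rewrite /= !tsnoc_max -e1 join_tleft_tright => e2.
  have [t St] : S' (tleft q) (tright q).
    by rewrite e1; apply: hf'; exists (tinit w), (w ord_max); rewrite tsnoc_tinit.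
  by split; [split => //; exists (tright q), t|split => //; exists t].
Qed.

(** * Curve selection *)

Section CurveSelection.
Variables (n : nat) (X : ('I_n -> M) -> Prop) (d : ('I_n -> M) -> ('I_n -> M) -> M).
Hypothesis Hdm : is_definable_metric X d.

Lemma Def_dist_graph x : D (n + 1) (fun v => X x /\ X (tleft v) /\ coord v n = d x (tleft v)).
Proof.
apply: Def_ext (Def_section x (Def_cast (esym (addnA n n 1)) (dm_graph Hdm))) => v.
set y := (fun i : 'I_(n + n + 1) => _).
have -> : tleft (tleft y) = x by apply: coord_ext => i hi; rewrite /y; coord_done.
have -> : tright (tleft y) = tleft v by apply: coord_ext => i hi; rewrite /y; coord_done.
by have -> : tright y ord0 = coord v n by rewrite /y; coord_done.
Qed.

Lemma Def_dist_lt x : X x -> D (1 + n) (fun u => X (tright u) /\ d x (tright u) <. coord u 0).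
Proof.
move=> Xx; pose f t := if t < n then t.+1 else 1 + n.
have hf j : j < n + 1 -> f j < (1 + n).+1 by rewrite /f; case: ifP; lia.
have hN : 1 + n < (1 + n).+1 by [].
have H := Def_proj (Def_and (Def_reindex hf (Def_dist_graph x)) (Def_lt_at hN (ltn0Sn _))).
apply: Def_ext H => u /=.
have E y : tleft (fun t : 'I_(n + 1) => coord (tsnoc u y) (f t)) = tright u.
  apply: coord_ext => i hi; rewrite coord_tleft // (coord_fun (fun k => coord _ (f k))).
    by rewrite /f; coord_done.
  by lia.
have E2 y : coord (fun t : 'I_(n + 1) => coord (tsnoc u y) (f t)) n = y.
  by rewrite (coord_fun (fun k => coord _ (f k))) /f; [coord_done|lia].
split.
  move=> [y [[_ [Xw e]] hlt]]; rewrite E in Xw; rewrite E E2 in e; subst y.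
  by move: hlt; coord_simpl.
by move=> [Xw hlt]; exists (d x (tright u)); rewrite E E2; coord_simpl.
Qed.

Definition near_point C x (q : 'I_1 -> M) (w : 'I_n -> M) :=
  0%M <. q ord0 /\ C w /\ d x w <. q ord0.

Lemma Def_near_point C x : X x -> D n C -> (forall y, C y -> X y) ->
  D (1 + n) (fun u => near_point C x (tleft u) (tright u)).
Proof.
move=> Xx DC CX.
have Hpos := @Def_pos_at (1 + n) 0 (ltn0Sn n).
apply: Def_ext (Def_and Hpos (Def_and (Def_tright 1 DC) (Def_dist_lt Xx))) => u.
rewrite /near_point; have -> : tleft u ord0 = coord u 0 by coord_done.
by split => [[h0 [Cw [_ h]]]|[h0 [Cw h]]]; do !split => //; apply: CX.
Qed.

Lemma conv_left_of_dist_lt x (gamma : M -> 'I_n -> M) : X x ->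
  (forall t, 0%M <. t -> d x (gamma t) <. t /\ X (gamma t)) -> conv_left X d 0%M None gamma x.
Proof.
move=> Xx Hg; split => // t [ht _] A [_ [_ [e [e0 He]]]].
case: (min_exists t e) => r [hrt hre hr].
have r0 : 0%M <. r by case: hr => ->.
case: (lt_dense r0) => s [s0 sr]; exists s; do 2 split => //.
  exact: lt_le_trans sr hrt.
case: (Hg s s0) => ds Xs; apply: He => //.
exact: lt_le_trans (lt_trans ds sr) hre.
Qed.

Theorem curve_selection : has_def_curve_selection X d.
Proof.
move=> C DC CX x [Xx [_ Hfr]].
have [f [hf Gf]] := definable_choice (Def_near_point Xx DC CX).
have near_t t : 0%M <. t -> exists w, near_point C x (fun _ => t) w.
  by move=> ht; case: (Hfr t ht) => y [Cy hy]; exists y.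
have f_near t : 0%M <. t -> near_point C x (fun _ => t) (f (fun _ => t)).
  by move=> /near_t; apply: hf.
exists 0%M, None, (fun t => f (fun _ => t)); split; last first.
  apply: conv_left_of_dist_lt => // t /f_near [_ [Cf df]].
  by split => //; apply: CX.
split; first by case: (no_max (0%M : M)) => t ht; exists t.
split; last by move=> t [/f_near [_ []]].
apply: Def_ext Gf => z; rewrite {1 2}(I1_fun_eta (tleft z)) /in_int; split.
  by move=> [[w [h _]] e]; split => // i; rewrite e.
move=> [[h _] e]; split; first exact: near_t.
by apply: functional_extensionality => i; rewrite e.
Qed.

End CurveSelection.
End LocallyOMinimal.

Theorem proposition4p19 (M : DCLOMExpansion) (n : nat)
    (X : ('I_n -> M) -> Prop) (d : ('I_n -> M) -> ('I_n -> M) -> M) :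
  is_definable_metric X d -> has_def_curve_selection X d.
Proof. exact: curve_selection. Qed.
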